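(* Let $\mathcal{O}=(G,x,y)$ be a regular origami. Suppose that for every prime $p$ at least one of the following holds: (1) $\gcd\big(p,\operatorname{ord}(y)\cdot\operatorname{ord}(yx)\big)=1$; or (2) there exist $m_1,m_2\in\mathbb{Z}_{\ge 0}$ with $m_1\not\equiv m_2 \pmod p$ and $\gcd\big(p,\operatorname{ord}(xy^{-m_1})\cdot\operatorname{ord}(xy^{-m_2})\big)=1$. Then the Veech group $\mathrm{SL}(\mathcal{O})$ is a totally non-congruence group.
   Context: A regular origami $(G,x,y)$ is given by a finite group $G$ generated by two elements $x,y$: it is the translation surface obtained from unit squares indexed by the elements $g\in G$, where the right edge of square $g$ is glued to the left edge of square $gx$ and the top edge of square $g$ is glued to the bottom edge of square $gy$ (a normal cover of the torus with deck group $G$). Two regular origamis $(G,x,y)$, $(G',x',y')$ are identified if there is a group isomorphism $G\to G'$ with $x\mapsto x'$, $y\mapsto y'$. The group $\mathrm{SL}(2,\mathbb{Z})$ acts on regular origamis via $S\cdot(G,x,y)=(G,y^{-1},x)$ and $T\cdot(G,x,y)=(G,x,yx^{-1})$, where $S=\begin{pmatrix}0&-1\\1&0\end{pmatrix}$, $T=\begin{pmatrix}1&1\\0&1\end{pmatrix}$ generate $\mathrm{SL}(2,\mathbb{Z})$; this is the action by affine shearing of the square tiling. The Veech group $\mathrm{SL}(\mathcal{O})$ of a (nontrivial) regular origami is the stabilizer of $\mathcal{O}$ under this action; it is a finite index subgroup of $\mathrm{SL}(2,\mathbb{Z})$. A finite index subgroup $\Gamma\le\mathrm{SL}(2,\mathbb{Z})$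 is a totally non-congruence group if for every integer $n\ge 1$ the reduction map $\mathrm{SL}(2,\mathbb{Z})\to\mathrm{SL}(2,\mathbb{Z}/n\mathbb{Z})$ restricted to $\Gamma$ is surjective. *)

From HB Require Import structures.
From mathcomp Require Import all_boot all_order all_algebra all_fingroup.
Set Implicit Arguments. Unset Strict Implicit. Unset Printing Implicit Defensive.
Import GRing.Theory.

Inductive sl2gen := GS | GSi | GT | GTi.

Local Open Scope ring_scope.

Definition mx2 (a b c d : int) : 'M[int]_2 :=
  \matrix_(i < 2, j < 2)
    if i == 0 :> nat then (if j == 0 :> nat then a else b)
    else (if j == 0 :> nat then c else d).

Definition gen_mx (g : sl2gen) : 'M[int]_2 :=
  match g with
  | GS  => mx2 0 (-1) 1 0
  | GSi => mx2 0 1 (-1) 0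
  | GT  => mx2 1 1 0 1
  | GTi => mx2 1 (-1) 0 1
  end.

Definition word_mx (w : seq sl2gen) : 'M[int]_2 :=
  foldr (fun g M => gen_mx g *m M) 1%:M w.

Local Close Scope ring_scope.
Local Open Scope group_scope.

Definition gen_act (gT : finGroupType) (g : sl2gen) (p : gT * gT) : gT * gT :=
  let: (x, y) := p in
  match g with
  | GS  => (y^-1, x)
  | GSi => (y, x^-1)
  | GT  => (x, y * x^-1)
  | GTi => (x, y * x)
  end.

Definition word_act (gT : finGroupType) (w : seq sl2gen) (p : gT * gT) : gT * gT :=
  foldr (@gen_act gT) p w.

(* Two regular origamis (G,x,y), (G,x',y') on the same group are identified iff
   some automorphism of G maps x to x' and y to y'. *)
Definition origami_iso (gT : finGroupType) (G : {set gT}) (p q : gT * gT) : Prop :=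
  exists2 a : {perm gT}, a \in Aut G & a p.1 = q.1 /\ a p.2 = q.2.

Definition veech_group (gT : finGroupType) (G : {set gT}) (x y : gT)
  (A : 'M[int]_2) : Prop :=
  exists w : seq sl2gen, word_mx w = A /\ origami_iso G (x, y) (word_act w (x, y)).

Local Close Scope group_scope.

(* Gamma (a subgroup of SL(2,Z), given as a predicate) is totally non-congruence:
   for each n >= 1, every element of SL(2, Z/nZ) (represented by an integer
   matrix B with det B = 1 mod n) is the reduction mod n of some element of Gamma. *)
Definition totally_noncongruence (Gamma : 'M[int]_2 -> Prop) : Prop :=
  forall n : nat, (0 < n)%N ->
  forall B : 'M[int]_2, (\det B == 1 %[mod n%:Z])%Z ->
  exists2 A : 'M[int]_2, Gamma A &
    forall i j : 'I_2, (A i j == B i j %[mod n%:Z])%Z.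

From mathcomp Require Import all_boot all_order all_algebra all_fingroup.
From mathcomp Require Import cyclic ring zify.
Set Implicit Arguments. Unset Strict Implicit. Unset Printing Implicit Defensive.
Import GRing.Theory Num.Theory Order.TTheory.

(* The Veech group of (G,x,y) contains every word w in S, T whose action fixes
   the generating pair (x,y) itself (the identity automorphism witnesses the
   isomorphism).  We show that these stabilizing words reduce onto SL(2,Z/n).
   1. Parabolic elements: if ord(x y^-m) | K then L^m T^K L^-m fixes (x,y),
      where L = S^-1 T S; likewise S^-1 T^K S when ord(y) | K, and
      T S^-1 T^K S T^-1 when ord(yx) | K.  Their matrices are transvections
      P(u1,u2,K) = 1 + K (u1,-u2)^t (u2,u1).
   2. Choosing K by the Chinese remainder theorem, for p prime to the order
      such a word is congruent to P(u1,u2,j) mod p^e (j arbitrary) and to 1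
      modulo any auxiliary modulus R prime to p.
   3. At each prime p the hypothesis then yields all lower and upper unipotent
      matrices mod p^e (in case (2) by conjugating P(1,-m2,_) by P(1,-m1,_)),
      hence S, T and every word of SL(2,Z).
   4. Prime powers are glued by the Chinese remainder theorem, the auxiliary
      modulus making each factor trivial at the other primes.
   5. Every integer matrix of determinant 1 mod n is congruent mod n to a word
      in S, T (Euclid's algorithm on the first column), proving the theorem. *)

Local Open Scope ring_scope.

Definition mat2 (R : Type) := (R * R * R * R)%type.

Section Mat2.
Variable R : comNzRingType.
Implicit Types (A B C : mat2 R) (K j a d m : R).

Definition m2mul A B : mat2 R :=
  let: (a, b, c, d) := A in let: (a', b', c', d') := B in
  (a * a' + b * c', a * b' + b * d', c * a' + d * c', c * b' + d * d').

Definition m2one : mat2 R := (1, 0, 0, 1).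

Definition m2det A : R := let: (a, b, c, d) := A in a * d - b * c.

Lemma m2mulA A B C : m2mul A (m2mul B C) = m2mul (m2mul A B) C.
Proof.
case: A => [[[? ?] ?] ?]; case: B => [[[? ?] ?] ?]; case: C => [[[? ?] ?] ?] /=.
by congr (_, _, _, _); ring.
Qed.

Lemma m2mul1l A : m2mul m2one A = A.
Proof. by case: A => [[[? ?] ?] ?] /=; congr (_, _, _, _); ring. Qed.

Lemma m2mul1r A : m2mul A m2one = A.
Proof. by case: A => [[[? ?] ?] ?] /=; congr (_, _, _, _); ring. Qed.

Lemma m2det_mul A B : m2det (m2mul A B) = m2det A * m2det B.
Proof. by case: A => [[[? ?] ?] ?]; case: B => [[[? ?] ?] ?] /=; ring. Qed.

(* Lower and upper unipotent matrices; T = upper 1 and L = S^-1 T S = lower 1. *)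
Definition lower j : mat2 R := (1, 0, - j, 1).
Definition upper j : mat2 R := (1, j, 0, 1).

(* The transvection 1 + K (u1, -u2)^t (u2, u1), fixing the vector (u1, -u2). *)
Definition transvection (u1 u2 : R) K : mat2 R :=
  (1 - K * u1 * u2, K * u1 ^+ 2, - (K * u2 ^+ 2), 1 + K * u1 * u2).

Lemma transvection0 (u1 u2 : R) : transvection u1 u2 0 = m2one.
Proof. by rewrite /transvection /m2one; congr (_, _, _, _); ring. Qed.

(* Two transvections of slopes m and m + d, with d invertible, generate all
   lower unipotent matrices: an explicit product yields lower j. *)
Lemma transvections_lower m d a j : a * d = 1 ->
  m2mul (m2mul (transvection 1 (- m) a) (transvection 1 (- (m + d)) (a ^+ 2 * j)))
        (transvection 1 (- m) (- a)) = lower j.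
Proof.
move=> ad; set c := a ^+ 2 * j.
have -> : m2mul (m2mul (transvection 1 (- m) a) (transvection 1 (- (m + d)) c))
                (transvection 1 (- m) (- a)) =
  (1 - c * (1 - a * d) * (- m - d + m * (a * d)), c * (1 - a * d) ^+ 2,
   - (c * (- m - d + m * (a * d)) ^+ 2), 1 + c * (1 - a * d) * (- m - d + m * (a * d))).
  by rewrite /transvection /=; congr (_, _, _, _); ring.
rewrite ad subrr /lower; congr (_, _, _, _); try ring.
have -> : c * (- m - d + m * 1) ^+ 2 = j * (a * d) ^+ 2 by rewrite /c; ring.
by rewrite ad expr1n mulr1.
Qed.

End Mat2.

Arguments m2one {R}.

Definition gen_m2 (g : sl2gen) : mat2 int :=
  match g with
  | GS  => (0, -1, 1, 0)
  | GSi => (0, 1, -1, 0)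
  | GT  => (1, 1, 0, 1)
  | GTi => (1, -1, 0, 1)
  end.

Definition word_m2 (w : seq sl2gen) : mat2 int :=
  foldr (fun g A => m2mul (gen_m2 g) A) m2one w.

Definition m2_to_mx (A : mat2 int) : 'M[int]_2 := let: (a, b, c, d) := A in mx2 a b c d.

Lemma mx2_mul a b c d a' b' c' d' :
  mx2 a b c d *m mx2 a' b' c' d' =
  mx2 (a * a' + b * c') (a * b' + b * d') (c * a' + d * c') (c * b' + d * d').
Proof.
apply/matrixP => i j; rewrite !mxE !big_ord_recr big_ord0 /= !mxE add0r.
by case: i => [[|[|//]] ?]; case: j => [[|[|//]] ?].
Qed.

Lemma mx2_one : (1%:M : 'M[int]_2) = mx2 1 0 0 1.
Proof.
apply/matrixP => i j; rewrite !mxE.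
by case: i => [[|[|//]] ?]; case: j => [[|[|//]] ?].
Qed.

Lemma word_mxE w : word_mx w = m2_to_mx (word_m2 w).
Proof.
elim: w => [|g w IH] /=; first by rewrite mx2_one.
by rewrite IH; case: (word_m2 w) => [[[a b] c] d]; case: g => /=; rewrite mx2_mul.
Qed.

Lemma word_m2_cat w1 w2 : word_m2 (w1 ++ w2) = m2mul (word_m2 w1) (word_m2 w2).
Proof.
elim: w1 => [|g w IH]; first by rewrite m2mul1l.
by rewrite cat_cons /= IH m2mulA.
Qed.

Lemma m2det_word w : m2det (word_m2 w) = 1.
Proof. by elim: w => [|g w IH] //=; rewrite m2det_mul IH mulr1; case: g. Qed.

Lemma det_mx2 (B : 'M[int]_2) : \det B = B 0 0 * B 1 1 - B 0 1 * B 1 0.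
Proof.
rewrite (expand_det_row _ 0) !big_ord_recr big_ord0 /= /cofactor !det_mx11 !mxE /=.
have lift00 : lift 0 0 = 1 :> 'I_2 by apply/val_inj.
have widen_max : widen_ord (leqnSn 1) ord_max = 0 :> 'I_2 by apply/val_inj.
have lift10 : lift 1 0 = 0 :> 'I_2 by apply/val_inj.
have max1 : ord_max = 1 :> 'I_2 by apply/val_inj.
by rewrite widen_max lift00 max1 lift10 add0r expr0 mul1r expr1 mulN1r mulrN.
Qed.

Definition tpow (z : int) : seq sl2gen :=
  if 0 <= z then nseq (absz z) GT else nseq (absz z) GTi.

Fixpoint lpow (m : nat) : seq sl2gen :=
  if m is m'.+1 then [:: GSi; GT; GS] ++ lpow m' else [::].

Fixpoint lpowN (m : nat) : seq sl2gen :=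
  if m is m'.+1 then [:: GSi; GTi; GS] ++ lpowN m' else [::].

Lemma word_m2_Tpow K : word_m2 (nseq K GT) = upper K%:Z.
Proof. by elim: K => [|K IH] //=; rewrite IH /= intS; congr (_, _, _, _); ring. Qed.

Lemma word_m2_TpowN K : word_m2 (nseq K GTi) = upper (- K%:Z).
Proof. by elim: K => [|K IH] //=; rewrite IH /= intS; congr (_, _, _, _); ring. Qed.

Lemma word_m2_tpow z : word_m2 (tpow z) = upper z.
Proof.
rewrite /tpow; case: ifP => hz; first by rewrite word_m2_Tpow abszE ger0_norm.
by rewrite word_m2_TpowN abszE ltr0_norm ?opprK // ltNge hz.
Qed.

Lemma word_m2_lpow m : word_m2 (lpow m) = lower m%:Z.
Proof. by elim: m => [|m IH] //=; rewrite IH /= intS; congr (_, _, _, _); ring. Qed.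

Lemma word_m2_lpowN m : word_m2 (lpowN m) = lower (- m%:Z).
Proof. by elim: m => [|m IH] //=; rewrite IH /= intS; congr (_, _, _, _); ring. Qed.

Definition m2cong (n : int) (A B : mat2 int) : Prop :=
  let: (a, b, c, d) := A in let: (a', b', c', d') := B in
  [/\ (n %| a - a')%Z, (n %| b - b')%Z, (n %| c - c')%Z & (n %| d - d')%Z].

Section Congruence.
Implicit Types (n : int) (A B C : mat2 int).

Lemma congz_trans n a b c : (n %| a - b)%Z -> (n %| b - c)%Z -> (n %| a - c)%Z.
Proof. by move=> h1 h2; rewrite -[a - c](subrKA b); apply: rpredD. Qed.

Lemma congz_add n a a' b b' :
  (n %| a - a')%Z -> (n %| b - b')%Z -> (n %| (a + b) - (a' + b'))%Z.
Proof. by move=> h1 h2; rewrite opprD addrACA; apply: rpredD. Qed.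

Lemma congz_mul n a a' b b' :
  (n %| a - a')%Z -> (n %| b - b')%Z -> (n %| a * b - a' * b')%Z.
Proof.
move=> h1 h2; have -> : a * b - a' * b' = a * (b - b') + (a - a') * b' by ring.
by apply: rpredD; [apply: dvdz_mull | apply: dvdz_mulr].
Qed.

Lemma m2cong_refl n A : m2cong n A A.
Proof. by case: A => [[[? ?] ?] ?] /=; rewrite !subrr !dvdz0. Qed.

Lemma m2cong_trans n A B C : m2cong n A B -> m2cong n B C -> m2cong n A C.
Proof.
case: A => [[[? ?] ?] ?]; case: B => [[[? ?] ?] ?]; case: C => [[[? ?] ?] ?] /=.
by case=> ? ? ? ? [? ? ? ?]; split; apply: congz_trans; eassumption.
Qed.

Lemma m2cong_mul n A B (A' B' : mat2 int) :
  m2cong n A A' -> m2cong n B B' -> m2cong n (m2mul A B) (m2mul A' B').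
Proof.
case: A => [[[? ?] ?] ?]; case: A' => [[[? ?] ?] ?].
case: B => [[[? ?] ?] ?]; case: B' => [[[? ?] ?] ?] /= [? ? ? ?] [? ? ? ?].
by split; apply: congz_add; apply: congz_mul.
Qed.

Lemma m2cong_dvd n m A B : (m %| n)%Z -> m2cong n A B -> m2cong m A B.
Proof.
move=> hmn; case: A => [[[? ?] ?] ?]; case: B => [[[? ?] ?] ?] /= [? ? ? ?].
by split; apply: dvdz_trans hmn _.
Qed.

Lemma m2cong_crt (q r : nat) A B :
  coprime q r -> m2cong q A B -> m2cong r A B -> m2cong (q * r)%N A B.
Proof.
move=> co; have coz : coprimez q r by rewrite /coprimez /gcdz /=; move/eqP: co => ->.
case: A => [[[? ?] ?] ?]; case: B => [[[? ?] ?] ?] /= [? ? ? ?] [? ? ? ?].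
by rewrite PoszM; split; rewrite Gauss_dvdz //; apply/andP; split.
Qed.

Lemma m2cong_mod1 A B : m2cong 1 A B.
Proof. by case: A => [[[? ?] ?] ?]; case: B => [[[? ?] ?] ?] /=; rewrite !dvd1z. Qed.

Lemma m2cong_transvection n (u1 u2 K j : int) :
  (n %| K - j)%Z -> m2cong n (transvection u1 u2 K) (transvection u1 u2 j).
Proof.
move=> h; rewrite /transvection /=; split.
- have -> : 1 - K * u1 * u2 - (1 - j * u1 * u2) = (K - j) * (- u1 * u2) by ring.
  exact: dvdz_mulr.
- have -> : K * u1 ^+ 2 - j * u1 ^+ 2 = (K - j) * u1 ^+ 2 by ring.
  exact: dvdz_mulr.
- have -> : - (K * u2 ^+ 2) - - (j * u2 ^+ 2) = (K - j) * (- u2 ^+ 2) by ring.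
  exact: dvdz_mulr.
- have -> : 1 + K * u1 * u2 - (1 + j * u1 * u2) = (K - j) * (u1 * u2) by ring.
  exact: dvdz_mulr.
Qed.

End Congruence.

(* Reduction modulo q > 1 is the ring morphism into 'Z_q; congruence mod q is
   equality of reductions, so identities over 'Z_q give congruences. *)
Definition m2red q (A : mat2 int) : mat2 'Z_q :=
  let: (a, b, c, d) := A in (a%:~R, b%:~R, c%:~R, d%:~R).

Lemma dvdz_Zp q (n : int) : (1 < q)%N -> (q %| n)%Z = (n%:~R == 0 :> 'Z_q).
Proof.
move=> hq; case: n => k; first by rewrite /dvdz /= -val_eqE /= val_Zp_nat.
by rewrite NegzE rpredN rmorphN oppr_eq0 /dvdz /= -val_eqE /= val_Zp_nat.
Qed.

Lemma m2red_mul q A B : m2red q (m2mul A B) = m2mul (m2red q A) (m2red q B).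
Proof.
case: A => [[[? ?] ?] ?]; case: B => [[[? ?] ?] ?] /=.
by rewrite !rmorphD !rmorphM.
Qed.

Lemma m2red_transvection q (u1 u2 K : int) :
  m2red q (transvection u1 u2 K) = transvection u1%:~R u2%:~R K%:~R.
Proof. by rewrite /transvection /= !(rmorphD, rmorphB, rmorphN, rmorphM, rmorphXn, rmorph1). Qed.

Lemma m2cong_red q A B : (1 < q)%N -> m2red q A = m2red q B -> m2cong q A B.
Proof.
move=> hq; case: A => [[[? ?] ?] ?]; case: B => [[[? ?] ?] ?] /= [e1 e2 e3 e4].
by split; rewrite dvdz_Zp // rmorphB /= ?e1 ?e2 ?e3 ?e4 subrr.
Qed.

Local Open Scope group_scope.

Lemma word_act_cat (gT : finGroupType) w1 w2 (p : gT * gT) :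
  word_act (w1 ++ w2) p = word_act w1 (word_act w2 p).
Proof. by rewrite /word_act foldr_cat. Qed.

Lemma act_Tpow (gT : finGroupType) K (u v : gT) :
  word_act (nseq K GT) (u, v) = (u, v * (u^-1) ^+ K).
Proof. by elim: K => [|K IH] /=; rewrite ?expg0 ?mulg1 // IH /= expgSr mulgA. Qed.

Lemma act_lpow (gT : finGroupType) m (u v : gT) :
  word_act (lpow m) (u, v) = (u * v ^+ m, v).
Proof. by elim: m => [|m IH] /=; rewrite ?expg0 ?mulg1 // IH /= invgK expgSr mulgA. Qed.

Lemma act_lpowN (gT : finGroupType) m (u v : gT) :
  word_act (lpowN m) (u, v) = (u * (v^-1) ^+ m, v).
Proof. by elim: m => [|m IH] /=; rewrite ?expg0 ?mulg1 // IH /= expgSr mulgA invgK. Qed.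

Lemma expg_order_dvd (gT : finGroupType) (u : gT) K : (#[u] %| K)%N -> u ^+ K = 1.
Proof. by rewrite order_dvdn => /eqP. Qed.

Local Close Scope group_scope.

Section Stabilizer.
Variables (gT : finGroupType) (x y : gT).

Definition stab (w : seq sl2gen) : Prop := word_act w (x, y) = (x, y).

Lemma stab_cat w1 w2 : stab w1 -> stab w2 -> stab (w1 ++ w2).
Proof. by rewrite /stab word_act_cat => h1 h2; rewrite h2. Qed.

Definition parabolic (u1 u2 : int) (ord : nat) : Prop :=
  forall K, (ord %| K)%N -> exists2 w, stab w & word_m2 w = transvection u1 u2 K%:Z.

Lemma parabolic_xym m : parabolic 1 (- m%:Z) #[(x * y ^- m)%g]%g.
Proof.
move=> K hK; exists (lpow m ++ nseq K GT ++ lpowN m).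
  rewrite /stab !word_act_cat act_lpowN act_Tpow act_lpow.
  have cycle : (((x * y^-1 ^+ m)^-1) ^+ K = 1)%g.
    by rewrite (expgVn y m) expgVn expg_order_dvd // invg1.
  by rewrite cycle mulg1 (expgVn y m) mulgKV.
rewrite !word_m2_cat word_m2_lpow word_m2_Tpow word_m2_lpowN /transvection /=.
by congr (_, _, _, _); ring.
Qed.

Lemma parabolic_y : parabolic 0 1 #[y]%g.
Proof.
move=> K hK; exists (GSi :: nseq K GT ++ [:: GS]).
  rewrite /stab -cat_cons word_act_cat /= -/(word_act _ _) act_Tpow invgK.
  by rewrite expg_order_dvd // mulg1 /= invgK.
rewrite -cat_cons word_m2_cat /= -/(word_m2 _) word_m2_Tpow /transvection /=.
by congr (_, _, _, _); ring.
Qed.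

Lemma parabolic_yx : parabolic 1 1 #[(y * x)%g]%g.
Proof.
move=> K hK; exists (GT :: GSi :: nseq K GT ++ [:: GS; GTi]).
  rewrite /stab -!cat_cons word_act_cat /= -/(word_act _ _) act_Tpow invgK.
  by rewrite expg_order_dvd // mulg1 /= invgK mulgK.
rewrite -!cat_cons word_m2_cat /= -/(word_m2 _) word_m2_Tpow /transvection /=.
by congr (_, _, _, _); ring.
Qed.

Definition realizable (q R : nat) (Q : mat2 int) : Prop :=
  exists w, [/\ stab w, m2cong q (word_m2 w) Q & m2cong R (word_m2 w) m2one].

Lemma realizable_one q R : realizable q R m2one.
Proof. by exists [::]; split; [| exact: m2cong_refl ..]. Qed.

Lemma realizable_mul q R A B :
  realizable q R A -> realizable q R B -> realizable q R (m2mul A B).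
Proof.
move=> [w1 [s1 c1 d1]] [w2 [s2 c2 d2]]; exists (w1 ++ w2).
split; rewrite ?word_m2_cat; [exact: stab_cat | exact: m2cong_mul |].
by rewrite -(m2mul1r m2one); apply: m2cong_mul.
Qed.

Lemma realizable_cong q R A B : realizable q R A -> m2cong q A B -> realizable q R B.
Proof. by move=> [w [s c d]] h; exists w; split => //; apply: m2cong_trans c h. Qed.

(* Step 2: choosing K = j mod q and K = 0 mod R * ord. *)
Lemma realizable_transvection u1 u2 ord q R :
  parabolic u1 u2 ord -> (0 < q)%N -> coprime q (R * ord) ->
  forall j, realizable q R (transvection u1 u2 j).
Proof.
move=> hpar q0 co j.
set j0 := absz (j %% q)%Z; set K := chinese q (R * ord) j0 0.
have Kq : K = j0 %[mod q] := chinese_modl co j0 0.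
have KR : (R * ord %| K)%N by apply/eqP; rewrite (chinese_modr co) mod0n.
have [w sw ew] := hpar K (dvdn_trans (dvdn_mull R (dvdnn ord)) KR).
exists w; split; rewrite // ew.
  apply: m2cong_transvection; rewrite -eqz_mod_dvd; apply/eqP.
  have j0E : j0%:Z = (j %% q)%Z by rewrite /j0 abszE ger0_norm // modz_ge0 // eqz_nat -lt0n.
  by rewrite modz_nat Kq -modz_nat j0E modz_mod.
rewrite -(transvection0 u1 u2); apply: m2cong_transvection; rewrite subr0.
by rewrite /dvdz /=; apply: dvdn_trans (dvdn_mulr ord (dvdnn R)) KR.
Qed.

Lemma dvdz_natMl (q s : nat) : (Posz q %| Posz (q * s))%Z.
Proof. exact: dvdn_mulr (dvdnn q). Qed.

Lemma dvdz_natMr (q s : nat) : (Posz s %| Posz (q * s))%Z.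
Proof. exact: dvdn_mull (dvdnn s). Qed.

(* Step 4 for two coprime moduli q and m: concatenating the two words. *)
Lemma realizable_crt q m s Q : coprime q m ->
  realizable q (m * s) Q -> realizable m (q * s) Q -> realizable (q * m) s Q.
Proof.
move=> co [w1 [s1 c1 d1]] [w2 [s2 c2 d2]]; exists (w1 ++ w2).
have d1m := m2cong_dvd (dvdz_natMl m s) d1; have d1s := m2cong_dvd (dvdz_natMr m s) d1.
have d2q := m2cong_dvd (dvdz_natMl q s) d2; have d2s := m2cong_dvd (dvdz_natMr q s) d2.
split; rewrite ?word_m2_cat; first exact: stab_cat.
  apply: m2cong_crt co _ _.
    by rewrite -(m2mul1r Q); apply: m2cong_mul.
  by rewrite -(m2mul1l Q); apply: m2cong_mul.
by rewrite -(m2mul1r m2one); apply: m2cong_mul.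
Qed.

Lemma realizable_local_global Q :
  (forall p e R, prime p -> (0 < e)%N -> coprime p R -> realizable (p ^ e) R Q) ->
  forall n s, (0 < n)%N -> coprime n s -> realizable n s Q.
Proof.
move=> hloc; elim/ltn_ind=> n IH s n0 co.
have [n1 | n_gt1] := leqP n 1.
  have -> : n = 1%N by lia.
  by exists [::]; split; [| exact: m2cong_mod1 | exact: m2cong_refl].
have pp := pdiv_prime n_gt1; set p := pdiv n in pp.
have [m cpm nE] := pfactor_coprime pp n0; set e := logn p n in nE.
have e0 : (0 < e)%N by rewrite logn_gt0 mem_primes pp n0 pdiv_dvd.
have m0 : (0 < m)%N by move: n0; rewrite nE muln_gt0 => /andP[].
have cps : coprime p s := coprime_dvdl (pdiv_dvd n) co.
have cms : coprime m s by apply: coprime_dvdl co; rewrite nE dvdn_mulr.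
rewrite nE mulnC; apply: realizable_crt.
- by rewrite coprimeXl // coprime_sym.
- by apply: hloc; rewrite // coprimeMr cpm cps.
- apply: IH; rewrite //; first by rewrite nE ltn_Pmulr // -(expn0 p) ltn_exp2l // prime_gt1.
  by rewrite coprimeMr coprimeXr // coprime_sym.
Qed.

Definition unipotents_realizable (q R : nat) : Prop :=
  forall j : int, realizable q R (lower j) /\ realizable q R (upper j).

Lemma upper_conj_lower (m j : int) :
  m2mul (m2mul (lower m) (transvection 1 m j)) (lower (- m)) = upper j.
Proof. by rewrite /transvection /lower /upper /=; congr (_, _, _, _); ring. Qed.

Lemma unipotents_orders_y_yx p e R : prime p -> (0 < e)%N -> coprime p R ->
  coprime p (#[y]%g * #[(y * x)%g]%g) -> unipotents_realizable (p ^ e) R.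
Proof.
move=> pp e0 cR; rewrite coprimeMr => /andP[cy cyx].
have q0 : (0 < p ^ e)%N by rewrite expn_gt0 prime_gt0.
have hL j : realizable (p ^ e) R (lower j).
  have -> : lower j = transvection 0 1 j by rewrite /transvection /lower; congr (_, _, _, _); ring.
  by apply: realizable_transvection parabolic_y _ _ _; rewrite // coprimeXl // coprimeMr cR.
have hC j : realizable (p ^ e) R (transvection 1 1 j).
  by apply: realizable_transvection parabolic_yx _ _ _; rewrite // coprimeXl // coprimeMr cR.
move=> j; split => //; rewrite -(upper_conj_lower 1).
by apply: realizable_mul; first apply: realizable_mul.
Qed.

Lemma unipotents_two_slopes p e R (m1 m2 : nat) : prime p -> (0 < e)%N ->
  coprime p R -> (m1 < m2)%N -> ~~ (p %| m2 - m1)%N ->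
  coprime p (#[(x * y ^- m1)%g]%g * #[(x * y ^- m2)%g]%g) ->
  unipotents_realizable (p ^ e) R.
Proof.
move=> pp e0 cR lt12 nd; rewrite coprimeMr => /andP[c1 c2].
set q := (p ^ e)%N.
have q0 : (0 < q)%N by rewrite expn_gt0 prime_gt0.
have q1 : (1 < q)%N by rewrite -(expn0 p) ltn_exp2l // prime_gt1.
have hP (m : nat) : coprime p #[(x * y ^- m)%g]%g ->
    forall j, realizable q R (transvection 1 (- m%:Z) j).
  by move=> cm j; apply: realizable_transvection (@parabolic_xym m) _ _ _; rewrite // coprimeXl // coprimeMr cR.
set d := (m2 - m1)%N.
have d_unit : (d%:R : 'Z_q) \is a GRing.unit by rewrite unitZpE // coprimeXl // prime_coprime.
set a : nat := val ((d%:R : 'Z_q)^-1).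
have aE : (a%:Z%:~R : 'Z_q) = (d%:R)^-1 by rewrite /a -pmulrn natr_Zp.
have hL j : realizable q R (lower j).
  apply: (realizable_cong (A := m2mul (m2mul (transvection 1 (- m1%:Z) a)
     (transvection 1 (- m2%:Z) (a%:Z ^+ 2 * j))) (transvection 1 (- m1%:Z) (- a%:Z)))).
    by apply: realizable_mul; first apply: realizable_mul; apply: hP.
  apply: m2cong_red => //; rewrite !m2red_mul !m2red_transvection.
  have -> : ((- m2%:Z)%:~R : 'Z_q) = - (m1%:R + d%:R).
    by rewrite rmorphN /= -natrD subnKC 1?ltnW // -pmulrn.
  rewrite !intrN !expr2 !intrM aE rmorph1 -pmulrn -expr2 transvections_lower; last by rewrite mulVr.
  by rewrite /lower /= intrN rmorph1 rmorph0.
move=> j; split => //; rewrite -(upper_conj_lower (- m1%:Z)).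
by apply: realizable_mul; first apply: realizable_mul; [| apply: hP |].
Qed.

Lemma generators_realizable q R :
  unipotents_realizable q R -> forall g, realizable q R (gen_m2 g).
Proof.
move=> hU g.
have up j : realizable q R (upper j) := proj2 (hU j).
have lo j : realizable q R (lower j) := proj1 (hU j).
case: g.
- have -> : gen_m2 GS = m2mul (m2mul (upper (-1)) (lower (-1))) (upper (-1)).
    by rewrite /upper /lower /=; congr (_, _, _, _); ring.
  by apply: realizable_mul; first apply: realizable_mul.
- have -> : gen_m2 GSi = m2mul (m2mul (upper 1) (lower 1)) (upper 1).
    by rewrite /upper /lower /=; congr (_, _, _, _); ring.
  by apply: realizable_mul; first apply: realizable_mul.
- exact: up 1.
- exact: up (-1).
Qed.

Hypothesis order_condition : forall p : nat, prime p ->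
  coprime p (#[y]%g * #[(y * x)%g]%g)
  \/ exists m1 m2 : nat, m1 != m2 %[mod p] /\
       coprime p (#[(x * y ^- m1)%g]%g * #[(x * y ^- m2)%g]%g).

Lemma unipotents_prime_power p e R : prime p -> (0 < e)%N -> coprime p R ->
  unipotents_realizable (p ^ e) R.
Proof.
move=> pp e0 cR; case: (order_condition pp) => [cyx | [m1 [m2 [ne co]]]].
  exact: unipotents_orders_y_yx.
have [lt12 | lt21 | eq12] := ltngtP m1 m2.
- by apply: (unipotents_two_slopes pp e0 cR lt12 _ co); rewrite -(eqn_mod_dvd p (ltnW lt12)) eq_sym.
- apply: (unipotents_two_slopes pp e0 cR lt21); last by rewrite mulnC.
  by rewrite -(eqn_mod_dvd p (ltnW lt21)).
- by rewrite eq12 eqxx in ne.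
Qed.

Lemma words_realizable n v : (0 < n)%N -> realizable n 1 (word_m2 v).
Proof.
move=> n0; elim: v => [|g v IH]; first exact: realizable_one.
apply: realizable_mul IH; apply: realizable_local_global (coprimen1 n) => //.
move=> p e R pp e0 cR; apply: generators_realizable.
exact: unipotents_prime_power.
Qed.

End Stabilizer.

(* Step 5 begins with Euclid's algorithm on a column (a, c): it is g times the
   first column of the matrix of some word. *)
Lemma column_reduction (a c : int) :
  exists v g al be ga de, word_m2 v = (al, be, ga, de) /\ a = al * g /\ c = ga * g.
Proof.
move: {2}(absz c).+1 (ltnSn (absz c)) => N; elim: N a c => [//|N IH] a c hc.
have [-> | c_neq0] := eqVneq c 0.
  by exists [::], a, 1, 0, 0, 1; rewrite mul1r mul0r.
set r := (a %% c)%Z.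
have hr : (absz r < N)%N.
  have : (absz r < absz c)%N by rewrite -ltz_nat !abszE ger0_norm ?ltz_mod ?modz_ge0.
  by move: hc; lia.
have [v [g [al [be [ga [de [E [har hcr]]]]]]]] := IH (- c) r hr.
set k := (a %/ c)%Z.
exists (tpow k ++ GSi :: v), g, (- k * al + ga), (- k * be + de), (- al), (- be).
split; first by rewrite word_m2_cat /= E word_m2_tpow /upper /=; congr (_, _, _, _); ring.
have hc' : c = - (al * g) by rewrite -har opprK.
split; last by rewrite hc'; ring.
by rewrite {1}(divz_eq a c) -/k -/r hcr hc'; ring.
Qed.

Lemma m2mul_upper_triangular (al be ga de b d g : int) : al * de - be * ga = 1 ->
  m2mul (al, be, ga, de) (g, de * b - be * d, 0, al * d - ga * b) = (al * g, b, ga * g, d).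
Proof.
move=> h; rewrite /=; congr (_, _, _, _); try ring.
  have -> : al * (de * b - be * d) + be * (al * d - ga * b) = b * (al * de - be * ga) by ring.
  by rewrite h mulr1.
have -> : ga * (de * b - be * d) + de * (al * d - ga * b) = d * (al * de - be * ga) by ring.
by rewrite h mulr1.
Qed.

(* An upper triangular matrix (h, e, 0, f) with h | n and h f = 1 mod n is
   congruent to +-T^{+-e}. *)
Lemma upper_triangular_lift (n : nat) (h e f : int) :
  (h %| n%:Z)%Z -> (n %| h * f - 1)%Z -> exists v, m2cong n (word_m2 v) (h, e, 0, f).
Proof.
move=> hn hf.
have h_unit : h = 1 \/ h = -1.
  have : (h %| h * f - (h * f - 1))%Z.
    by apply: rpredB; [apply: dvdz_mulr | apply: dvdz_trans hf].
  rewrite (_ : h * f - (h * f - 1) = 1); last by ring.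
  by rewrite dvdz1 => /eqP; lia.
move: hf; case: h_unit => -> hf.
  exists (tpow e); rewrite word_m2_tpow /upper /= !subrr; split; rewrite ?dvdz0 //.
  by rewrite -opprB rpredN; move: hf; rewrite mul1r.
exists (GS :: GS :: tpow (- e)); rewrite /= word_m2_tpow /upper /=.
rewrite !(mul0r, mulr0, mul1r, mulr1, add0r, addr0, mulN1r, opprK) !subrr.
split; rewrite ?dvdz0 //.
by have -> : -1 - f = -1 * f - 1 by ring.
Qed.

Lemma SL2_lift (n : nat) (a b c d : int) : (0 < n)%N -> (n %| a * d - b * c - 1)%Z ->
  exists v, m2cong n (word_m2 v) (a, b, c, d).
Proof.
move=> n0 hdet.
have [v1 [g [al [be [ga [de [E1 [ha hc]]]]]]]] := column_reduction a c.
have d1 : al * de - be * ga = 1 by have := m2det_word v1; rewrite E1.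
set b' := de * b - be * d; set d' := al * d - ga * b.
have hN : m2mul (al, be, ga, de) (g, b', 0, d') = (a, b, c, d)
  by rewrite m2mul_upper_triangular // -ha -hc.
have [v2 [h [al2 [be2 [ga2 [de2 [E2 [hg hn]]]]]]]] := column_reduction g n%:Z.
have d2 : al2 * de2 - be2 * ga2 = 1 by have := m2det_word v2; rewrite E2.
set e := de2 * b' - be2 * d'; set f := al2 * d' - ga2 * b'.
have hN' : m2mul (al2, be2, ga2, de2) (h, e, 0, f) = (g, b', n%:Z, d')
  by rewrite m2mul_upper_triangular // -hg -hn.
have hf : (n %| h * f - 1)%Z.
  have -> : h * f - 1 = (a * d - b * c - 1) - n%:Z * b' by rewrite hn ha hc hg /f /d'; ring.
  by apply: rpredB => //; apply: dvdz_mulr; apply: dvdzz.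
have hhn : (h %| n%:Z)%Z by rewrite hn dvdz_mull.
have [v3 hv3] := upper_triangular_lift e hhn hf.
exists (v1 ++ v2 ++ v3); rewrite !word_m2_cat E1 E2 -hN.
apply: m2cong_mul; first exact: m2cong_refl.
apply: m2cong_trans (m2cong_mul (m2cong_refl _ _) hv3) _; rewrite hN' /=.
by rewrite !subrr subr0 !dvdz0 dvdzz.
Qed.

Local Close Scope ring_scope.
Unset Implicit Arguments.

Theorem mainTheorem2 (gT : finGroupType) (G : {group gT}) (x y : gT)
  (hgen : <<[set x; y]>>%g = G) :
  (forall p : nat, prime p ->
     coprime p (#[y]%g * #[(y * x)%g]%g)%N
     \/ exists m1 m2 : nat, m1 != m2 %[mod p] /\
          coprime p (#[(x * y ^- m1)%g]%g * #[(x * y ^- m2)%g]%g)%N) ->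
  totally_noncongruence (veech_group G x y).
Proof.
move=> H n n0 B hB.
rewrite eqz_mod_dvd det_mx2 in hB.
have [v hv] := SL2_lift n0 hB.
have [w [sw cw _]] := words_realizable H v n0.
exists (word_mx w).
  by exists w; split => //; exists 1%g; rewrite ?group1 // sw !perm1.
have := m2cong_trans cw hv; rewrite word_mxE.
case: (word_m2 w) => [[[a b] c] d] /= [h1 h2 h3 h4] i j.
have ord2 (k : 'I_2) : k = 0%R \/ k = 1%R by case: k => [[|[|//]] ?]; [left|right]; apply/val_inj.
by rewrite eqz_mod_dvd; case: (ord2 i) => ->; case: (ord2 j) => ->; rewrite !mxE.
Qed.
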